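(* A set $\mathcal{K}\subseteq\wp(\mathcal{G})$ is coherent if and only if there is a non-empty set $\mathfrak{D}$ whose members are non-empty sets of coherent sets of desirable gambles, such that $\mathfrak{D}$ is downwards closed (for all $\mathbb{D}_1,\mathbb{D}_2\in\mathfrak{D}$ there is $\mathbb{D}\in\mathfrak{D}$ with $\mathbb{D}\subseteq\mathbb{D}_1\cap\mathbb{D}_2$), and for all $B\subseteq\mathcal{G}$: $B\in\mathcal{K}$ iff there is some $\mathbb{D}\in\mathfrak{D}$ such that for every $D\in\mathbb{D}$, $B\cap D\neq\emptyset$.
   Context: $\Omega$ is a non-empty set and $\mathcal{G}$ is the set of bounded functions $\Omega\to\mathbb{R}$. $f\geq g$ means pointwise $\geq$; $f\gneq g$ means $f\geq g$ and $f\neq g$; $\mathcal{G}_{\gneq 0}=\{f: f\gneq 0\}$. $\mathrm{posi}(B)=\{\sum_{i=1}^m\lambda_i h_i: m\geq1,\lambda_i>0,h_i\in B\}$. A set $D\subseteq\mathcal{G}$ is coherent if $0\notin D$; $\mathcal{G}_{\gneq0}\subseteq D$; $\lambda g\in D$ whenever $g\in D,\lambda>0$; and $f+g\in D$ whenever $f,g\in D$. A set $\mathcal{K}\subseteq\wp(\mathcal{G})$ is coherent if: (K$_\emptyset$) $\emptyset\notin\mathcal{K}$; (K$_0$) if $A\in\mathcal{K}$ then $A\setminus\{0\}\in\mathcal{K}$; (K$_{\gneq0}$) if $g\in\mathcal{G}_{\gneq0}$ then $\{g\}\in\mathcal{K}$; (K$_\supseteq$) if $A\in\mathcal{K}$ and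 $B\supseteq A$ then $B\in\mathcal{K}$; (K$_{\mathrm{Dom}}$) if $A\in\mathcal{K}$ and for each $g\in A$, $f_g$ is a gamble with $f_g\geq g$, then $\{f_g: g\in A\}\in\mathcal{K}$; (K$_{\mathrm{Add}}$) if $A_1,\ldots,A_n\in\mathcal{K}$ (finitely many) and for each $\langle g_1,\ldots,g_n\rangle\in A_1\times\cdots\times A_n$, $f_{\langle g_1,\ldots,g_n\rangle}$ is some member of $\mathrm{posi}(\{g_1,\ldots,g_n\})$, then $\{f_{\langle g_1,\ldots,g_n\rangle}:\langle g_1,\ldots,g_n\rangle\in A_1\times\cdots\times A_n\}\in\mathcal{K}$. *)

From Stdlib Require Import Reals.
Open Scope R_scope.
Set Implicit Arguments.

Section Gambles.
Variable Omega : Type.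

Definition bounded (f : Omega -> R) : Prop := exists M, forall w, Rabs (f w) <= M.

Definition gamble := {f : Omega -> R | bounded f}.
Definition gval (g : gamble) : Omega -> R := proj1_sig g.

Definition gset := gamble -> Prop.

Definition ggeq (f g : gamble) : Prop := forall w, gval g w <= gval f w.
Definition gzero (g : gamble) : Prop := forall w, gval g w = 0.
Definition gpos (g : gamble) : Prop := (forall w, 0 <= gval g w) /\ ~ gzero g.

Definition posi (B : gset) : gset := fun f =>
  exists (m : nat) (lam : nat -> R) (h : nat -> gamble),
    (1 <= m)%nat /\
    (forall i, (i < m)%nat -> 0 < lam i /\ B (h i)) /\
    forall w, gval f w = sum_f_R0 (fun i => lam i * gval (h i) w) (pred m).

Definition coherentD (D : gset) : Prop :=
  (forall g, D g -> ~ gzero g) /\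
  (forall g, gpos g -> D g) /\
  (forall g (l : R), D g -> 0 < l -> forall h, (forall w, gval h w = l * gval g w) -> D h) /\
  (forall f g, D f -> D g -> forall h, (forall w, gval h w = gval f w + gval g w) -> D h).

Definition set_empty (A : gset) : Prop := forall g, ~ A g.

Definition coherentK (K : gset -> Prop) : Prop :=
  (forall A, K A -> ~ set_empty A) /\
  (forall A, K A -> K (fun g => A g /\ ~ gzero g)) /\
  (forall g, gpos g -> K (fun h => h = g)) /\
  (forall A B, K A -> (forall g, A g -> B g) -> K B) /\
  (forall A (f : gamble -> gamble),
      K A -> (forall g, A g -> ggeq (f g) g) ->
      K (fun h => exists g, A g /\ h = f g)) /\
  (* K_Add: A_0..A_{n-1} in K; f chooses, for each tuple (g_0..g_{n-1}) in the
     product, an element of posi({g_0..g_{n-1}}); f depends only on the tuple. *)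
  (forall (n : nat) (A : nat -> gset) (f : (nat -> gamble) -> gamble),
      (forall i, (i < n)%nat -> K (A i)) ->
      (forall g g', (forall i, (i < n)%nat -> g i = g' i) -> f g = f g') ->
      (forall g, (forall i, (i < n)%nat -> A i (g i)) ->
         posi (fun h => exists i, (i < n)%nat /\ h = g i) (f g)) ->
      K (fun h => exists g, (forall i, (i < n)%nat -> A i (g i)) /\ h = f g)).

End Gambles.

(* For coherent K, the sets of coherent D meeting every member of a finite
   subfamily of K form a downward-directed system representing K. This rests on
   separation: if A_1..A_n are in K and B is not, some coherent D meets every A_i
   and misses B. For nonzero choices g_i in A_i, the gambles dominating 0 or a
   positive combination of the g_i form a coherent set unless some positive
   combination is <= 0. If for every choice this set is incoherent or meets B,
   each choice yields a positive combination of the g_i dominated by an element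
   of B or by 0; K_Add collects these combinations into a member of K, and K_Dom,
   K_0 and K_⊇ then put B into K.
   Conversely, every axiom of the represented K is inherited from the coherent
   sets; for K_Add, directedness provides one system all of whose members meet
   every A_i, and coherent sets are closed under posi. *)
From Pilot Require Import Defs.
From Stdlib Require Import Reals Lra Lia List.
From Stdlib Require Import Classical ClassicalEpsilon FunctionalExtensionality PropExtensionality.
Open Scope R_scope.
Local Notation bounded := Pilot.Defs.bounded.

Lemma choice_on {X Y : Type} (y0 : Y) (P : X -> Prop) (Rel : X -> Y -> Prop) :
  (forall x, P x -> exists y, Rel x y) -> exists f : X -> Y, forall x, P x -> Rel x (f x).
Proof.
  intro H. apply (choice (fun x y => P x -> Rel x y)). intro x. destruct (classic (P x)) as [Hx | Hx].
  - destruct (H x Hx) as [y Hy]. exists y. intros _. exact Hy.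
  - exists y0. intro. contradiction.
Qed.

Section Gambles.
Context {Omega : Type}.

Lemma bounded_plus (f g : Omega -> R) :
  bounded f -> bounded g -> bounded (fun w => f w + g w).
Proof.
  intros [M1 H1] [M2 H2]. exists (M1 + M2). intro w.
  eapply Rle_trans; [apply Rabs_triang | apply Rplus_le_compat; auto].
Qed.

Lemma bounded_scale (l : R) (f : Omega -> R) : bounded f -> bounded (fun w => l * f w).
Proof.
  intros [M H]. exists (Rabs l * M). intro w. rewrite Rabs_mult.
  apply Rmult_le_compat_l; auto using Rabs_pos.
Qed.

Lemma bounded_ext (f g : Omega -> R) : (forall w, f w = g w) -> bounded f -> bounded g.
Proof. intros Hfg [M H]. exists M. intro w. rewrite <- Hfg. auto. Qed.

Lemma bounded_zero : bounded (fun _ : Omega => 0).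
Proof. exists 0. intro. rewrite Rabs_R0. lra. Qed.

Definition zero_gamble : gamble Omega := exist _ _ bounded_zero.

Definition meets (A D : gset Omega) : Prop := exists g, A g /\ D g.

(* [posi P g] unfolds to [posi_fn P (gval g)]. *)
Definition posi_fn (P : gset Omega) (e : Omega -> R) : Prop :=
  exists (m : nat) (lam : nat -> R) (h : nat -> gamble Omega),
    (1 <= m)%nat /\
    (forall i, (i < m)%nat -> 0 < lam i /\ P (h i)) /\
    forall w, e w = sum_f_R0 (fun i => lam i * gval (h i) w) (pred m).

Lemma posi_fn_ind (P : gset Omega) (Q : (Omega -> R) -> Prop) :
  (forall e e', (forall w, e w = e' w) -> Q e -> Q e') ->
  (forall l h, 0 < l -> P h -> Q (fun w => l * gval h w)) ->
  (forall e1 e2, Q e1 -> Q e2 -> Q (fun w => e1 w + e2 w)) ->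
  forall e, posi_fn P e -> Q e.
Proof.
  intros Qext Qgen Qadd e (m & lam & h & Hm & Hlh & He).
  apply (Qext _ _ (fun w => eq_sym (He w))).
  assert (partial : forall k, (k < m)%nat ->
            Q (fun w => sum_f_R0 (fun i => lam i * gval (h i) w) k)).
  { induction k as [|k IH]; intro Hk; simpl.
    - destruct (Hlh 0%nat Hk). apply Qgen; assumption.
    - destruct (Hlh (S k) Hk). apply Qadd; [apply IH; lia | apply Qgen; assumption]. }
  apply partial. lia.
Qed.

Lemma posi_fn_bounded (P : gset Omega) e : posi_fn P e -> bounded e.
Proof.
  revert e. apply (posi_fn_ind P (@bounded Omega)).
  - exact bounded_ext.
  - intros l h _ _. apply bounded_scale, (proj2_sig h).
  - intros e1 e2. apply bounded_plus.
Qed.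

Lemma posi_fn_ext (P : gset Omega) e e' :
  (forall w, e w = e' w) -> posi_fn P e -> posi_fn P e'.
Proof.
  intros Hee (m & lam & h & Hm & Hlh & He). exists m, lam, h.
  split; [exact Hm | split; [exact Hlh |]]. intro w. rewrite <- Hee. apply He.
Qed.

Lemma posi_fn_mono (P P' : gset Omega) e :
  (forall h, P h -> P' h) -> posi_fn P e -> posi_fn P' e.
Proof.
  intros HPP' (m & lam & h & Hm & Hlh & He). exists m, lam, h.
  split; [exact Hm | split; [|exact He]].
  intros i Hi. destruct (Hlh i Hi). auto.
Qed.

Lemma posi_fn_gen (P : gset Omega) l h : 0 < l -> P h -> posi_fn P (fun w => l * gval h w).
Proof.
  intros Hl Hh. exists 1%nat, (fun _ => l), (fun _ => h).
  split; [lia | split; [intros; split; assumption | intro w; reflexivity]].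
Qed.

Lemma posi_fn_scale (P : gset Omega) l e :
  0 < l -> posi_fn P e -> posi_fn P (fun w => l * e w).
Proof.
  intros Hl (m & lam & h & Hm & Hlh & He).
  exists m, (fun i => l * lam i), h. split; [exact Hm | split].
  - intros i Hi. destruct (Hlh i Hi). split; [apply Rmult_lt_0_compat|]; assumption.
  - intro w. rewrite He, scal_sum. apply sum_eq. intros. ring.
Qed.

Lemma posi_fn_add (P : gset Omega) e1 e2 :
  posi_fn P e1 -> posi_fn P e2 -> posi_fn P (fun w => e1 w + e2 w).
Proof.
  intros (m1 & lam1 & h1 & Hm1 & Hlh1 & He1) (m2 & lam2 & h2 & Hm2 & Hlh2 & He2).
  exists (m1 + m2)%nat, (fun i => if Nat.ltb i m1 then lam1 i else lam2 (i - m1)%nat),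
         (fun i => if Nat.ltb i m1 then h1 i else h2 (i - m1)%nat).
  split; [lia | split].
  - intros i Hi. destruct (Nat.ltb_spec i m1); [apply Hlh1 | apply Hlh2]; lia.
  - intro w. rewrite He1, He2, (tech2 _ (pred m1) (pred (m1 + m2))) by lia.
    replace (pred (m1 + m2) - S (pred m1))%nat with (pred m2) by lia.
    f_equal; apply sum_eq; intros i Hi; cbv beta.
    + destruct (Nat.ltb_spec i m1); [reflexivity | lia].
    + destruct (Nat.ltb_spec (S (pred m1) + i) m1); [lia |].
      replace (S (pred m1) + i - m1)%nat with i by lia. reflexivity.
Qed.

Lemma coherentD_posi (D P : gset Omega) :
  coherentD D -> (forall h, P h -> D h) -> forall g, posi P g -> D g.
Proof.
  intros (_ & _ & Dscale & Dadd) PD g.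
  set (Q := fun e => bounded e /\ forall g', (forall w, gval g' w = e w) -> D g').
  enough (HQ : posi_fn P (gval g) -> Q (gval g)) by (intro Hg; apply HQ; [exact Hg | reflexivity]).
  apply (posi_fn_ind P Q).
  - intros e e' Hee [Hb HD]. split; [exact (bounded_ext _ _ Hee Hb) |].
    intros g' Hg'. apply HD. intro w. rewrite Hg'. auto.
  - intros l h Hl Hh. split; [apply bounded_scale, (proj2_sig h) |].
    intros g' Hg'. exact (Dscale h l (PD h Hh) Hl g' Hg').
  - intros e1 e2 [B1 D1] [B2 D2]. split; [apply bounded_plus; assumption |].
    intros g' Hg'.
    apply (Dadd (exist _ e1 B1) (exist _ e2 B2)); [apply D1 | apply D2 | exact Hg'];
      intro; reflexivity.
Qed.

Lemma coherentD_dominate (D : gset Omega) f g : coherentD D -> D g -> ggeq f g -> D f.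
Proof.
  intros (_ & Dpos & Dscale & Dadd) Dg Hfg.
  set (d := exist _ _ (bounded_plus _ _ (proj2_sig f) (bounded_scale (-1) _ (proj2_sig g)))
            : gamble Omega).
  destruct (classic (gzero d)) as [Hd | Hd].
  - apply (Dscale g 1 Dg Rlt_0_1). intro w. specialize (Hd w). simpl in Hd.
    unfold gval. lra.
  - apply (Dadd g d Dg).
    + apply Dpos. split; [| exact Hd]. intro w. specialize (Hfg w). simpl.
      unfold gval in Hfg. lra.
    + intro w. simpl. unfold gval. ring.
Qed.


Definition posi0 (P : gset Omega) (e : Omega -> R) : Prop :=
  (forall w, e w = 0) \/ posi_fn P e.

Definition partial_loss (P : gset Omega) : Prop :=
  exists e, posi_fn P e /\ forall w, e w <= 0.

Definition natural_extension (P : gset Omega) : gset Omega := fun h =>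
  ~ gzero h /\ exists e, posi0 P e /\ forall w, e w <= gval h w.

Lemma posi0_scale (P : gset Omega) l e : 0 < l -> posi0 P e -> posi0 P (fun w => l * e w).
Proof.
  intros Hl [Z | He].
  - left. intro w. rewrite Z. ring.
  - right. apply posi_fn_scale; assumption.
Qed.

Lemma posi0_add (P : gset Omega) e1 e2 :
  posi0 P e1 -> posi0 P e2 -> posi0 P (fun w => e1 w + e2 w).
Proof.
  intros [Z1 | P1] [Z2 | P2].
  - left. intro w. rewrite Z1, Z2. ring.
  - right. revert P2. apply posi_fn_ext. intro w. cbv beta. rewrite Z1. ring.
  - right. revert P1. apply posi_fn_ext. intro w. cbv beta. rewrite Z2. ring.
  - right. apply posi_fn_add; assumption.
Qed.

Lemma posi0_cancel (P : gset Omega) e1 e2 :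
  ~ partial_loss P -> posi0 P e1 -> posi0 P e2 ->
  (forall w, e1 w + e2 w <= 0) -> forall w, e1 w = 0.
Proof.
  intros Hnl [Z1 | P1] H2 Hle; [exact Z1 |].
  exfalso. apply Hnl. exists (fun w => e1 w + e2 w). split; [| exact Hle].
  destruct H2 as [Z2 | P2].
  - revert P1. apply posi_fn_ext. intro w. cbv beta. rewrite Z2. ring.
  - apply posi_fn_add; assumption.
Qed.

Lemma natural_extension_coherent (P : gset Omega) :
  ~ partial_loss P -> coherentD (natural_extension P).
Proof.
  intro Hnl. split; [| split; [| split]].
  - intros h [Hnz _]. exact Hnz.
  - intros h [Hge Hnz]. split; [exact Hnz |].
    exists (fun _ => 0). split; [left; intro; reflexivity | exact Hge].
  - intros h l [Hnz (e & He & Heh)] Hl h' Hh'. split.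
    + intro Hz. apply Hnz. intro w. specialize (Hz w). rewrite Hh' in Hz.
      destruct (Rmult_integral _ _ Hz); [lra | assumption].
    + exists (fun w => l * e w). split; [apply posi0_scale; assumption |].
      intro w. rewrite Hh'. apply Rmult_le_compat_l; [lra | apply Heh].
  - intros f1 f2 [Hnz1 (e1 & He1 & Hle1)] [_ (e2 & He2 & Hle2)] h Hh. split.
    + intro Hz.
      assert (Hsum : forall w, e1 w + e2 w <= 0).
      { intro w. specialize (Hz w). specialize (Hh w).
        specialize (Hle1 w). specialize (Hle2 w). lra. }
      pose proof (posi0_cancel P e1 e2 Hnl He1 He2 Hsum) as Z1.
      assert (Z2 : forall w, e2 w = 0).
      { apply (posi0_cancel P e2 e1 Hnl He2 He1). intro w. specialize (Hsum w). lra. }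
      apply Hnz1. intro w. specialize (Hz w). specialize (Hh w). specialize (Hle1 w).
      specialize (Hle2 w). specialize (Z1 w). specialize (Z2 w). lra.
    + exists (fun w => e1 w + e2 w). split; [apply posi0_add; assumption |].
      intro w. rewrite Hh. specialize (Hle1 w). specialize (Hle2 w). lra.
Qed.

Lemma natural_extension_incl (P : gset Omega) h :
  P h -> ~ gzero h -> natural_extension P h.
Proof.
  intros Hh Hnz. split; [exact Hnz |]. exists (fun w => 1 * gval h w).
  split; [right; apply posi_fn_gen; [lra | exact Hh] | intro w; cbv beta; lra].
Qed.

Lemma natural_extension_or_dominated (P B : gset Omega) :
  (forall b, B b -> ~ gpos b) ->
  (coherentD (natural_extension P) /\ ~ meets B (natural_extension P)) \/
  exists e, posi P e /\ exists t, ggeq t e /\ (B t \/ gzero t).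
Proof.
  intros Bnpos. destruct (classic (partial_loss P)) as [(e & He & Hle) | Hnl].
  - right. exists (exist _ e (posi_fn_bounded P e He)). split; [exact He |].
    exists zero_gamble. split; [exact Hle | right; intro; reflexivity].
  - destruct (classic (meets B (natural_extension P)))
      as [(b & Bb & Hnz & e & He & Heb) | Hdisj].
    2: { left. split; [apply natural_extension_coherent |]; assumption. }
    right. destruct He as [Z | He].
    + exfalso. apply (Bnpos b Bb). split; [| exact Hnz].
      intro w. rewrite <- (Z w). apply Heb.
    + exists (exist _ e (posi_fn_bounded P e He)). split; [exact He |].
      exists b. split; [exact Heb | left; exact Bb].
Qed.

End Gambles.

Definition selection {Omega : Type} (n : nat) (A : nat -> gset Omega)
  (g : nat -> gamble Omega) : Prop :=
  forall i, (i < n)%nat -> A i (g i).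

Definition range {Omega : Type} (n : nat) (g : nat -> gamble Omega) : gset Omega :=
  fun h => exists i, (i < n)%nat /\ h = g i.

Section FromCoherentK.
Context {Omega : Type}.
Variable K : gset Omega -> Prop.
Hypothesis HK : coherentK K.

Lemma K_posi_choice n (A : nat -> gset Omega) (Q : gset Omega) :
  (forall i, (i < n)%nat -> K (A i)) ->
  (forall g, selection n A g -> exists e, posi (range n g) e /\ Q e) ->
  K Q.
Proof.
  destruct HK as (_ & _ & _ & Ksup & _ & Kadd). intros KA HQ.
  destruct (choice_on zero_gamble _ _ HQ) as [F HF].
  (* K_Add needs a choice that only depends on the first n coordinates. *)
  set (trunc := fun (g : nat -> gamble Omega) i =>
                  if Nat.ltb i n then g i else zero_gamble).
  assert (Htrunc : forall g i, (i < n)%nat -> trunc g i = g i).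
  { intros g i Hi. unfold trunc. destruct (Nat.ltb_spec i n); [reflexivity | lia]. }
  assert (Hsel : forall g, selection n A g -> selection n A (trunc g)).
  { intros g Hg i Hi. rewrite Htrunc; auto. }
  apply (Ksup (fun h => exists g, selection n A g /\ h = F (trunc g))).
  - apply Kadd; [exact KA | |].
    + intros g g' Hgg'. f_equal. apply functional_extensionality. intro i.
      unfold trunc. destruct (Nat.ltb_spec i n); auto.
    + intros g Hg. apply (posi_fn_mono (range n (trunc g))).
      * intros h (i & Hi & ->). exists i. split; [exact Hi | apply Htrunc, Hi].
      * apply (HF _ (Hsel g Hg)).
  - intros h (g & Hg & ->). apply (HF _ (Hsel g Hg)).
Qed.

Lemma K_dominated (A B : gset Omega) :
  K A -> (forall a, A a -> exists t, ggeq t a /\ (B t \/ gzero t)) -> K B.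
Proof.
  destruct HK as (_ & K0 & _ & Ksup & Kdom & _). intros KA Hdom.
  destruct (choice_on zero_gamble _ _ Hdom) as [T HT].
  pose proof (K0 _ (Kdom A T KA (fun a Ha => proj1 (HT a Ha)))) as KT.
  apply (Ksup _ _ KT). intros h [(a & Ha & ->) Hnz].
  destruct (proj2 (HT a Ha)) as [Bt | Zt]; [exact Bt | contradiction].
Qed.

Lemma coherent_separation (l : list (gset Omega)) (B : gset Omega) :
  (forall A, In A l -> K A) -> ~ K B ->
  exists D, coherentD D /\ (forall A, In A l -> meets A D) /\ ~ meets B D.
Proof.
  pose proof HK as (_ & K0 & Kpos & Ksup & _ & _). intros Kl HB.
  set (n := length l).
  set (A := fun i h => nth i l (fun _ => False) h /\ ~ gzero h).
  assert (KA : forall i, (i < n)%nat -> K (A i)).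
  { intros i Hi. apply K0, Kl, nth_In. exact Hi. }
  assert (Bnpos : forall b, B b -> ~ gpos b).
  { intros b Bb Hb. apply HB, (Ksup _ _ (Kpos b Hb)). intros h ->. exact Bb. }
  destruct (classic (exists g, selection n A g /\
              coherentD (natural_extension (range n g)) /\
              ~ meets B (natural_extension (range n g))))
    as [(g & Hg & Hcoh & Hdisj) | Hno].
  - exists (natural_extension (range n g)). split; [exact Hcoh | split; [| exact Hdisj]].
    intros A' HA'. destruct (In_nth l A' (fun _ => False) HA') as (i & Hi & <-).
    destruct (Hg i Hi) as [HAi Hnz]. exists (g i). split; [exact HAi |].
    apply natural_extension_incl; [exists i; split; auto | exact Hnz].
  - exfalso. apply HB.
    apply (K_dominated (fun e => exists t, ggeq t e /\ (B t \/ gzero t))); [| auto].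
    apply (K_posi_choice n A); [exact KA |]. intros g Hg.
    destruct (natural_extension_or_dominated (range n g) B Bnpos) as [Hsep | He];
      [exfalso; apply Hno; exists g; auto | exact He].
Qed.

Definition meeting_all (l : list (gset Omega)) (D : gset Omega) : Prop :=
  coherentD D /\ forall A, In A l -> meets A D.

Definition meeting_system (Db : gset Omega -> Prop) : Prop :=
  exists l, (forall A, In A l -> K A) /\ Db = meeting_all l.

Lemma meeting_system_nil : meeting_system (meeting_all nil).
Proof. exists nil. split; [intros A [] | reflexivity]. Qed.

Lemma meeting_system_member Db :
  meeting_system Db -> (exists D, Db D) /\ (forall D, Db D -> coherentD D).
Proof.
  intros (l & Kl & ->). split.
  - destruct HK as (Kempty & _).
    destruct (coherent_separation l (fun _ => False) Kl) as (D & Hc & Hm & _).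
    { intro Ke. exact (Kempty _ Ke (fun g Hg => Hg)). }
    exists D. split; assumption.
  - intros D [Hc _]. exact Hc.
Qed.

Lemma meeting_system_directed Db1 Db2 :
  meeting_system Db1 -> meeting_system Db2 ->
  exists Db, meeting_system Db /\ (forall D, Db D -> Db1 D /\ Db2 D).
Proof.
  intros (l1 & K1 & ->) (l2 & K2 & ->). exists (meeting_all (l1 ++ l2)). split.
  - exists (l1 ++ l2). split; [| reflexivity].
    intros A HA. destruct (in_app_or _ _ _ HA); auto.
  - intros D [Hc HD]. split; split; [exact Hc | | exact Hc |];
      intros A HA; apply HD, in_or_app; auto.
Qed.

Lemma K_iff_meeting_system B :
  K B <-> exists Db, meeting_system Db /\ forall D, Db D -> meets B D.
Proof.
  split.
  - intro KB. exists (meeting_all (B :: nil)). split.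
    + exists (B :: nil). split; [intros A [<- | []]; exact KB | reflexivity].
    + intros D [_ HD]. apply HD. left. reflexivity.
  - intros (Db & (l & Kl & ->) & HB). apply NNPP. intro nKB.
    destruct (coherent_separation l B Kl nKB) as (D & Hc & Hm & Hd).
    apply Hd, HB. split; assumption.
Qed.

End FromCoherentK.

Section FromDirectedSystem.
Context {Omega : Type}.
Variable DD : (gset Omega -> Prop) -> Prop.
Hypothesis DD_inhabited : exists Db, DD Db.
Hypothesis DD_coherent :
  forall Db, DD Db -> (exists D, Db D) /\ (forall D, Db D -> coherentD D).
Hypothesis DD_directed :
  forall D1 D2, DD D1 -> DD D2 -> exists D, DD D /\ (forall E, D E -> D1 E /\ D2 E).

Definition represented (B : gset Omega) : Prop :=
  exists Db, DD Db /\ forall D, Db D -> meets B D.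

Lemma represented_finite n (A : nat -> gset Omega) :
  (forall i, (i < n)%nat -> represented (A i)) ->
  exists Db, DD Db /\ forall D, Db D -> forall i, (i < n)%nat -> meets (A i) D.
Proof.
  induction n as [| n IH]; intros HA.
  - destruct DD_inhabited as [Db HDb]. exists Db. split; [exact HDb | intros; lia].
  - destruct IH as (Db1 & H1 & M1); [intros i Hi; apply HA; lia |].
    destruct (HA n ltac:(lia)) as (Db2 & H2 & M2).
    destruct (DD_directed _ _ H1 H2) as (Db & HDb & Hsub).
    exists Db. split; [exact HDb |]. intros D HD i Hi. destruct (Hsub D HD) as [D1 D2].
    destruct (Nat.eq_dec i n) as [-> | Hne]; [apply M2, D2 | apply M1; [exact D1 | lia]].
Qed.

Lemma represented_transfer (A A' : gset Omega) :
  (forall D, coherentD D -> meets A D -> meets A' D) -> represented A -> represented A'.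
Proof.
  intros HAA' (Db & HDb & HA). exists Db. split; [exact HDb |].
  intros D HD. apply HAA'; [apply (DD_coherent Db HDb), HD | apply HA, HD].
Qed.

Lemma represented_coherent : coherentK represented.
Proof.
  split; [| split; [| split; [| split; [| split]]]].
  - intros A (Db & HDb & HA) Hempty.
    destruct (DD_coherent Db HDb) as [[D HD] _].
    destruct (HA D HD) as (g & Ag & _). exact (Hempty g Ag).
  - intros A. apply represented_transfer.
    intros D (Dnz & _) (g & Ag & Dg). exists g. split; [split; [exact Ag | apply Dnz, Dg] | exact Dg].
  - intros g Hg. destruct DD_inhabited as [Db HDb]. exists Db. split; [exact HDb |].
    intros D HD. exists g. split; [reflexivity |].
    apply (proj2 (DD_coherent Db HDb) D HD), Hg.
  - intros A B HA HAB. revert HA. apply represented_transfer.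
    intros D _ (g & Ag & Dg). exists g. auto.
  - intros A f HA Hf. revert HA. apply represented_transfer.
    intros D HD (g & Ag & Dg). exists (f g).
    split; [exists g; auto | apply (coherentD_dominate D (f g) g HD Dg), Hf, Ag].
  - intros n A f HA _ Hposi.
    destruct (represented_finite n A HA) as (Db & HDb & HM). exists Db. split; [exact HDb |].
    intros D HD. destruct (choice_on zero_gamble _ _ (HM D HD)) as [g Hg].
    exists (f g). split; [exists g; split; [intros i Hi; apply Hg, Hi | reflexivity] |].
    apply (coherentD_posi D (range n g)).
    + apply (DD_coherent Db HDb), HD.
    + intros h (i & Hi & ->). apply Hg, Hi.
    + apply Hposi. intros i Hi. apply Hg, Hi.
Qed.

End FromDirectedSystem.

Theorem mainTheorem10 (Omega : Type) (w0 : Omega) (K : gset Omega -> Prop) :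
  coherentK K <->
  exists (DD : (gset Omega -> Prop) -> Prop),
    (exists Db, DD Db) /\
    (forall Db, DD Db -> (exists D, Db D) /\ (forall D, Db D -> coherentD D)) /\
    (forall D1 D2, DD D1 -> DD D2 ->
       exists D, DD D /\ (forall E, D E -> D1 E /\ D2 E)) /\
    (forall B : gset Omega,
       K B <-> exists Db, DD Db /\ forall D, Db D -> exists g, B g /\ D g).
Proof.
  split.
  - intro HK. exists (meeting_system K).
    split; [exists (meeting_all nil); apply meeting_system_nil |].
    split; [apply meeting_system_member, HK |].
    split; [apply meeting_system_directed | apply K_iff_meeting_system, HK].
  - intros (DD & Hinh & Hcoh & Hdir & Hrep).
    replace K with (represented DD); [apply represented_coherent; assumption |].
    apply functional_extensionality. intro B.
    apply propositional_extensionality. symmetry. apply Hrep.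
Qed.
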